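(* Let $\{X_\alpha:\alpha\in\mathscr A\}$ be a family of Banach spaces and $\kappa$ an infinite cardinal. If for every $r\in(0,1)$ there are infinitely many $\alpha\in\mathscr A$ such that $X_\alpha$ is $(r,r)$-$\mathrm{SQ}_{<\kappa}$, then $\ell_\infty(\mathscr A,X_\alpha)$ is $(<1,1)$-$\mathrm{SQ}_{<\kappa}$.
   Context: $\ell_\infty(\mathscr A,X_\alpha)$ is the Banach space of functions $x$ on $\mathscr A$ with $x(\alpha)\in X_\alpha$ and $\|x\|_\infty=\sup_\alpha\|x(\alpha)\|<\infty$. For $r,s\in(0,1]$, a Banach space $Z$ is $(r,s)$-$\mathrm{SQ}_{<\kappa}$ if for every set $A\subset S_Z$ with $|A|<\kappa$ there exists $y\in S_Z$ with $\|rx\pm sy\|\le 1$ for all $x\in A$. $Z$ is $(<1,1)$-$\mathrm{SQ}_{<\kappa}$ if it is $(t,1)$-$\mathrm{SQ}_{<\kappa}$ for every $t\in(0,1)$. *)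

From HB Require Import structures.
From mathcomp Require Import all_boot all_order all_algebra.
From mathcomp Require Import all_classical all_reals all_analysis.
Set Implicit Arguments. Unset Strict Implicit. Unset Printing Implicit Defensive.
Import Order.TTheory GRing.Theory Num.Theory.
Import numFieldNormedType.Exports.
Local Open Scope classical_set_scope.
Local Open Scope ring_scope.

(* |A| < kappa, where the cardinal kappa is represented by a set K of that
   cardinality (in some type U). *)
Definition card_lt {T U : Type} (A : set T) (K : set U) : Prop :=
  (A #<= K)%card /\ ~ (K #<= A)%card.

(* Generic (r,s)-SQ_{<kappa} property for a real normed space given by its
   carrier (a subset [mem] of a type Z), its norm, addition and scaling. *)
Definition SQ_gen {R : realType} {Z U : Type} (mem : set Z) (nrm : Z -> R)
  (add : Z -> Z -> Z) (scale : R -> Z -> Z) (r s : R) (K : set U) : Prop :=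
  forall A : set Z, A `<=` [set x | mem x /\ nrm x = 1] -> card_lt A K ->
  exists y : Z, mem y /\ nrm y = 1 /\
    forall x, A x -> nrm (add (scale r x) (scale s y)) <= 1 /\
                    nrm (add (scale r x) (scale (- s) y)) <= 1.

Definition SQ {R : realType} {U : Type} (Z : normedModType R) (r s : R)
  (K : set U) : Prop :=
  @SQ_gen R Z U setT (fun x => `|x|) (fun x y => x + y) (fun a x => a *: x) r s K.

Definition linf_mem {R : realType} {I : Type} (X : I -> normedModType R)
  (x : forall a, X a) : Prop := exists M : R, forall a, `|x a| <= M.
Definition linf_norm {R : realType} {I : Type} (X : I -> normedModType R)
  (x : forall a, X a) : R := sup (range (fun a => `|x a|)).
Definition linf_add {R : realType} {I : Type} (X : I -> normedModType R)
  (x y : forall a, X a) : forall a, X a := fun a => x a + y a.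
Definition linf_scale {R : realType} {I : Type} (X : I -> normedModType R)
  (c : R) (x : forall a, X a) : forall a, X a := fun a => c *: x a.

Definition SQ_linf {R : realType} {I U : Type} (X : I -> normedModType R)
  (r s : R) (K : set U) : Prop :=
  @SQ_gen R (forall a, X a) U (@linf_mem R I X) (@linf_norm R I X)
    (@linf_add R I X) (@linf_scale R I X) r s K.

Definition SQ_lt1_linf {R : realType} {I U : Type} (X : I -> normedModType R)
  (K : set U) : Prop :=
  forall t : R, 0 < t < 1 -> SQ_linf X t 1 K.

(* For t < 1 pick radii t <= r_n < 1 tending to 1 and pairwise distinct
   coordinates a_n such that X_(a_n) is (r_n,r_n)-SQ.  Given A, the witness y
   takes at a_n a vector of norm r_n supplied by the SQ property of X_(a_n)
   for the normalised a_n-coordinates of A, and is 0 elsewhere.  As c u + w is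
   a convex combination of u + w and w - u when |c| <= 1, the bounds
   |r_n u +- r_n w| <= 1 yield |t x(a_n) +- y(a_n)| <= 1, and the sup-norm of y
   is sup_n r_n = 1. *)

From HB Require Import structures.
From mathcomp Require Import all_boot all_order all_algebra.
From mathcomp Require Import all_classical all_reals all_analysis.
From mathcomp Require Import ring lra.
Import Order.TTheory GRing.Theory Num.Theory.
Import numFieldNormedType.Exports.
Local Open Scope classical_set_scope.
Local Open Scope ring_scope.

Lemma normZD_le1 (R : realFieldType) (V : normedModType R) (u w : V) (c : R) :
  -1 <= c <= 1 -> `|u + w| <= 1 -> `|u - w| <= 1 -> `|c *: u + w| <= 1.
Proof.
move=> /andP[c_ge c_le] uDw uBw.
set a := (1 + c) / 2; set b := (1 - c) / 2.
have [a_ge0 b_ge0] : 0 <= a /\ 0 <= b by rewrite /a /b; split; lra.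
have convex_comb : c *: u + w = a *: (u + w) + b *: (w - u).
  transitivity ((a - b) *: u + (a + b) *: w).
    by congr (_ *: _ + _); [|rewrite -[LHS]scale1r; congr (_ *: _)]; rewrite /a /b; field.
  by rewrite scalerBl scalerDl !scalerDr scalerN addrACA [- _ + _]addrC.
rewrite convex_comb; apply: (le_trans (ler_normD _ _)).
rewrite (normrZ a) (normrZ b) (ger0_norm a_ge0) (ger0_norm b_ge0) (distrC w u).
have : a * `|u + w| <= a by rewrite ler_piMr.
have : b * `|u - w| <= b by rewrite ler_piMr.
rewrite /a /b; lra.
Qed.

Lemma card_le_lt_trans {T T' U : Type} {B : set T} {A : set T'} {K : set U} :
  (B #<= A)%card -> card_lt A K -> card_lt B K.
Proof.
move=> BA [AK KA]; split; first exact: card_le_trans BA AK.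
by move=> KB; apply: KA; exact: card_le_trans KB BA.
Qed.

Lemma injective_choice_infinite_sets {I : Type} {T : nat -> set I} :
  (forall n, infinite_set (T n)) ->
  exists f : nat -> I, injective f /\ forall n, T n (f n).
Proof.
move=> Tinf.
have /choice[g gP] : forall nF : nat * set I,
    exists a, finite_set nF.2 -> T nF.1 a /\ ~ nF.2 a.
  move=> [n F] /=; have [Ffin|Finf] := pselect (finite_set F).
    by have [a []] := infinite_setN0 (infinite_setD (Tinf n) Ffin); exists a.
  by have [a _] := infinite_setN0 (Tinf n); exists a.
pose fix prefix n := if n is m.+1 then g (m, prefix m) |` prefix m else set0.
have prefix_fin n : finite_set (prefix n).
  by elim: n => [|n IH] /=; rewrite ?finite_set0 ?finite_setU ?finite_set1.
pose f n := g (n, prefix n).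
have prefixP k n : (k < n)%N -> prefix n (f k).
  elim: n => // n IH; rewrite ltnS leq_eqVlt => /orP[/eqP ->|/IH]; by [left|right].
have f_new n : ~ prefix n (f n) by case: (gP (n, prefix n) (prefix_fin n)).
exists f; split; last by move=> n; case: (gP (n, prefix n) (prefix_fin n)).
move=> k n e; case: (ltngtP k n) => // [/prefixP|/prefixP]; first by rewrite e => /f_new.
by rewrite -e => /f_new.
Qed.

Lemma sup_range_eq (R : realType) (I : Type) (g : I -> R) (c : R) :
  (forall a, g a <= c) -> (forall s, s < c -> exists a, s < g a) ->
  sup (range g) = c.
Proof.
move=> g_le_c approx.
have [a0 _] : exists a, c - 1 < g a by apply: approx; rewrite ltrBlDr ltrDl.
have g_ub : has_ubound (range g) by exists c => _ [a _ <-].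
apply/eqP; rewrite eq_le ge_sup ?andTb; last 2 first.
- by exists (g a0), a0.
- by move=> _ [a _ <-].
rewrite leNgt; apply/negP => /approx[a]; apply/negP; rewrite -leNgt.
by apply: ub_le_sup => //; exists a.
Qed.

Lemma seq_in_itv_cofinal1 {R : realType} {t : R} : t < 1 ->
  exists r : nat -> R, (forall n, t <= r n < 1) /\
    forall s, s < 1 -> exists n, s < r n.
Proof.
move=> t_lt1; have t1_gt0 : 0 < 1 - t by rewrite subr_gt0.
exists (fun n => 1 - (1 - t) / n.+1%:R); split => [n|s s_lt1].
  rewrite lerBrDl -lerBrDr ler_pdivrMr // ler_pMr // ler1n /=.
  by rewrite ltrBlDr ltrDl divr_gt0.
exists (Num.trunc ((1 - t) / (1 - s))).
rewrite ltrBrDl -ltrBrDr ltr_pdivrMr // mulrC -ltr_pdivrMr ?subr_gt0 //.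
exact: truncnS_gt.
Qed.

Lemma SQ_unit_ball {R : realType} {V : normedModType R} {U : Type} {K : set U}
    {r t : R} (B : set V) :
  SQ V r r K -> 0 < t -> t <= r -> r <= 1 ->
  (forall x, B x -> `|x| <= 1) -> card_lt B K ->
  exists v : V, `|v| = r /\
    forall x, B x -> `|t *: x + v| <= 1 /\ `|t *: x - v| <= 1.
Proof.
move=> SQV t_gt0 t_le_r r_le1 B_ball B_small.
have r_gt0 : 0 < r by exact: lt_le_trans t_le_r.
pose S := (fun x => `|x|^-1 *: x) @` (B `&` [set x | x != 0]).
have S_sphere : S `<=` [set x | setT x /\ `|x| = 1].
  move=> _ [x [_ x_neq0] <-]; split => //.
  by rewrite normrZ normrV ?unitfE ?normr_eq0 // normr_id mulVf // normr_eq0.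
have S_small : card_lt S K.
  apply: card_le_lt_trans B_small.
  exact: card_le_trans (card_image_le _ _) (subset_card_le (@subIsetl _ _ _)).
have [w [_ [w_norm Hw]]] := SQV S S_sphere S_small.
exists (r *: w); split; first by rewrite normrZ w_norm mulr1 gtr0_norm.
move=> x Bx; have [->|x_neq0] := eqVneq x 0.
  by rewrite scaler0 add0r sub0r normrN normrZ w_norm mulr1 gtr0_norm.
have x_gt0 : 0 < `|x| by rewrite normr_gt0.
pose u := `|x|^-1 *: x.
have [uDw uBw] := Hw u (ex_intro2 _ _ x (conj Bx x_neq0) erefl).
have -> : t *: x = (t * `|x| / r) *: (r *: u).
  by rewrite /u !scalerA; congr (_ *: _); field; rewrite !gt_eqF.
have c_itv : -1 <= t * `|x| / r <= 1.
  have tx_le_r : t * `|x| <= r by rewrite (le_trans _ t_le_r) // ler_piMr ?(ltW t_gt0) ?B_ball.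
  have c_ge0 : 0 <= t * `|x| / r by rewrite divr_ge0 ?mulr_ge0 ?ltW.
  by rewrite ler_pdivrMr // mul1r tx_le_r andbT (le_trans _ c_ge0) ?lerN10.
split; first by apply: normZD_le1; rewrite -?scaleNr.
by rewrite -scaleNr; apply: normZD_le1; rewrite // scaleNr opprK.
Qed.

Lemma linf_norm_ge {R : realType} {I : Type} {X : I -> normedModType R}
    (x : forall a, X a) (a : I) :
  linf_mem x -> `|x a| <= linf_norm x.
Proof. by move=> [M xM]; apply: ub_le_sup; [exists M => _ [b _ <-]|exists a]. Qed.

Lemma linf_norm_le {R : realType} {I : Type} {X : I -> normedModType R}
    (a0 : I) (x : forall a, X a) (M : R) :
  (forall a, `|x a| <= M) -> linf_norm x <= M.
Proof. by move=> xM; apply: ge_sup; [exists `|x a0|, a0|move=> _ [a _ <-]]. Qed.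

Definition pm_bounded {R : realType} {I : Type} {X : I -> normedModType R}
    (t : R) (A : set (forall a, X a)) {a : I} (v : X a) : Prop :=
  forall x, A x -> `|t *: x a + v| <= 1 /\ `|t *: x a - v| <= 1.

Section CoordinateWitness.
Context {R : realType} {I U : Type} {X : I -> normedModType R} {K : set U}.
Context {t : R} {A : set (forall a, X a)}.
Hypotheses (t_gt0 : 0 < t) (t_le1 : t <= 1).
Hypotheses (A_ball : forall x a, A x -> `|x a| <= 1) (A_small : card_lt A K).

Lemma pm_bounded0 (a : I) : pm_bounded t A (0 : X a).
Proof.
move=> x Ax; rewrite subr0 addr0 normrZ ger0_norm ?(ltW t_gt0) //.
by split; rewrite (le_trans _ t_le1) // ler_piMr ?(ltW t_gt0) ?A_ball.
Qed.

Lemma pm_bounded_SQ {a : I} {r : R} :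
  SQ (X a) r r K -> t <= r -> r <= 1 -> exists2 v : X a, `|v| = r & pm_bounded t A v.
Proof.
move=> SQa t_le_r r_le1.
have [|v [v_norm vP]] := SQ_unit_ball ((fun x => x a) @` A) SQa t_gt0 t_le_r r_le1 _
  (card_le_lt_trans (card_image_le _ _) A_small).
  by move=> _ [x Ax <-]; exact: A_ball.
by exists v => // x Ax; apply: vP; exists x.
Qed.

Lemma pm_bounded_family {f : nat -> I} {r : nat -> R} :
  injective f -> (forall n, SQ (X (f n)) (r n) (r n) K) ->
  (forall n, t <= r n <= 1) ->
  exists y : forall a, X a, [/\ forall a, `|y a| <= 1,
    forall a, pm_bounded t A (y a) & forall n, r n <= `|y (f n)|].
Proof.
move=> f_inj f_SQ r_itv.
have coord a : exists v : X a, [/\ `|v| <= 1, pm_bounded t A v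
    & forall n, a = f n -> r n <= `|v|].
  have [[n ->]|not_f] := pselect (exists n, a = f n); last first.
    exists 0; split; [by rewrite normr0 | exact: pm_bounded0 |].
    by move=> n an; case: not_f; exists n.
  have /andP[t_le r_le1] := r_itv n.
  have [v v_norm v_pm] := pm_bounded_SQ (f_SQ n) t_le r_le1.
  by exists v; rewrite v_norm; split=> // m /f_inj <-.
exists (fun a => projT1 (cid (coord a))).
have /all_and3[y_le1 y_pm y_big] := fun a => projT2 (cid (coord a)).
by split=> // n; apply: y_big.
Qed.

End CoordinateWitness.

Theorem theorem6p9 (R : realType) (I : Type) (X : I -> completeNormedModType R)
  (U : Type) (K : set U) (Kinf : ~ finite_set K) :
  (forall r : R, 0 < r < 1 -> ~ finite_set [set a | SQ (X a) r r K]) ->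
  SQ_lt1_linf (fun a => X a : normedModType R) K.
Proof.
move=> SQ_inf t /andP[t_gt0 t_lt1] A A_sphere A_small.
have [r [r_itv r_cofinal]] := seq_in_itv_cofinal1 t_lt1.
have r_in01 n : 0 < r n < 1.
  by have /andP[t_le ->] := r_itv n; rewrite (lt_le_trans t_gt0 t_le).
have [f [f_inj f_SQ]] := injective_choice_infinite_sets (fun n => SQ_inf _ (r_in01 n)).
have A_ball x a : A x -> `|x a| <= 1.
  by move=> /A_sphere[x_mem <-]; exact: linf_norm_ge.
have r_le n : t <= r n <= 1 by have /andP[-> /ltW] := r_itv n.
have [y [y_le1 y_pm y_big]] :=
  pm_bounded_family t_gt0 (ltW t_lt1) A_ball A_small f_inj f_SQ r_le.
exists y; split; first by exists 1.
split.
  apply: sup_range_eq => // s /r_cofinal[n s_lt].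
  by exists (f n); apply: lt_le_trans s_lt (y_big n).
move=> x Ax; split; apply: (linf_norm_le (f 0)) => a; rewrite /linf_add /linf_scale.
  by rewrite scale1r; case: (y_pm a x Ax).
by rewrite scaleN1r; case: (y_pm a x Ax).
Qed.
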